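(* Let $h(x,u)$ be a symmetric ($h(x,u)=h(u,x)$) polynomial of degree at most two in each of $x,u$, with discriminant $h_u^2-2hh_{uu}=r(x)$. Then: - if $r=0$: either $h=\frac1\alpha(x-u)^2$ for a constant $\alpha$ (q0), or $h=(\gamma_0xu+\gamma_1(x+u)+\gamma_2)^2$ for constants $\gamma_i$ (h1); - if $r=1$: either $h=\frac{1}{2\alpha}(x-u)^2-\frac\alpha2$ (q1), or $h=\gamma_0(x+u)^2+\gamma_1(x+u)+\gamma_2$ with $\gamma_1^2-4\gamma_0\gamma_2=1$ (h2); - if $r=x$: $h=\frac{1}{4\alpha}(x-u)^2-\frac\alpha2(x+u)+\frac{\alpha^3}{4}$ (q2); - if $r=x^2$: $h=\gamma_0x^2u^2+\gamma_1xu+\gamma_2$ with $\gamma_1^2-4\gamma_0\gamma_2=1$ (h3), or $h$ is of the form (q3) below with $\delta=0$; - if $r=x^2-\delta^2$: $h=\frac{\alpha}{1-\alpha^2}(x^2+u^2)-\frac{1+\alpha^2}{1-\alpha^2}xu+\delta^2\frac{1-\alpha^2}{4\alpha}$ (q3); - if $r=4x^3-g_2x-g_3$ with $g_2^3-27g_3^2\neq0$: $h=\frac{1}{\sqrt{r(\alpha)}}\Big[\big(xu+\alpha(x+u)+g_2/4\big)^2-(x+u+\alpha)(4\alpha xu-g_3)\Big]$ (q4). In each case $\alpha$ denotes a constant (for which the expression is defined) and $\sqrt{r(\alpha)}$ denotes either square root.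
   Context: Subscripts denote partial derivatives; $h_u^2-2hh_{uu}$ is the discriminant of $h$ as a quadratic polynomial in $u$ and is a polynomial in $x$ of degree at most four. *)

From HB Require Import structures.
From mathcomp Require Import all_boot all_order all_algebra.
Set Implicit Arguments. Unset Strict Implicit. Unset Printing Implicit Defensive.
Import Order.TTheory GRing.Theory Num.Theory.
Local Open Scope ring_scope.

(* A bivariate polynomial h(x,u) is an element of {poly {poly C}}:
   the outer variable is u, the inner (coefficient) variable is x. *)

Definition ev2 (C : comNzRingType) (h : {poly {poly C}}) (x u : C) : C :=
  (h.[u%:P]).[x].

Definition deg2_each (C : comNzRingType) (h : {poly {poly C}}) : Prop :=
  (size h <= 3)%N /\ (forall i : nat, (size (h`_i)%R <= 3)%N).

Definition disc (C : comNzRingType) (h : {poly {poly C}}) : {poly {poly C}} :=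
  h^`() ^+ 2 - 2%:R * h * h^`(2).

From HB Require Import structures.
From mathcomp Require Import all_boot all_order all_algebra.
From mathcomp Require Import ring.
Import Order.TTheory GRing.Theory Num.Theory.
Local Open Scope ring_scope.

(* By symmetry and the degree bounds, h = A(x) u^2 + B(x) u + D(x) with
   A = s + q x + p x^2, B = v + t x + q x^2 and D = w + v x + s x^2, and the
   discriminant is the quartic c0 + c1 x + ... + c4 x^4 := B^2 - 4 A D.
   Matching c0, ..., c4 with the coefficients of r gives five polynomial
   equations in p, q, s, t, v, w; in all six cases c4 = 0.  If s = 0 this
   forces q = 0 and the equations are immediate.  If s != 0 then
   p = q^2 / (4 s), and with T := q v / (2 s) + 2 s one has
     c3 = 2 q (t - T),  c1 = 2 v (t - T) + (q / s) c0,
     c2 = (t - T) (t + T) + (q / (2 s))^2 c0,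
   so either t = T, which makes h a perfect square and r a constant times a
   square, or q = 0.  Each case is then solved explicitly; the family (q3)
   comes from the rational parametrization of the hyperbola t^2 - 4 s^2 = 1. *)

Lemma poly_size3 {R : nzSemiRingType} {p : {poly R}} :
  (size p <= 3)%N -> p = Poly [:: p`_0; p`_1; p`_2].
Proof.
move=> sp; apply/polyP => i; rewrite coef_Poly.
by case: i => [|[|[|i]]] //=; rewrite nth_nil nth_default // (leq_trans sp).
Qed.

Lemma Poly3E {R : comNzRingType} (a b c : R) :
  Poly [:: a; b; c] = a%:P + b%:P * 'X + c%:P * 'X^2.
Proof. rewrite /= !cons_poly_def; ring. Qed.

Lemma sqrf0_eq {R : idomainType} {x : R} : x ^+ 2 = 0 -> x = 0.
Proof. by move/eqP; rewrite sqrf_eq0 => /eqP. Qed.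

(* The way hypotheses are fed to [ring] and [field], which cannot use them. *)
Lemma eq_scaled_diff {R : pzRingType} {a b : R} (E : a = b) (k : R) {c d : R} :
  c - d = k * (a - b) -> c = d.
Proof. by rewrite E subrr mulr0 => /subr0_eq. Qed.

Lemma hyperbola_param {F : numFieldType} {s t : F} :
  s != 0 -> t ^+ 2 - 4 * s ^+ 2 = 1 ->
  exists a : F, [/\ a != 0, a ^+ 2 != 1, s = a / (1 - a ^+ 2)
                  & t = - (1 + a ^+ 2) / (1 - a ^+ 2)].
Proof.
move=> s0 E.
have t1 : 1 + t != 0.
  apply: contraNneq s0 => t1.
  have ht : t = -1 by apply/eqP; rewrite -subr_eq0 opprK addrC t1.
  apply/eqP; apply: sqrf0_eq; apply: (eq_scaled_diff E (- 1 / 4)).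
  by rewrite ht; field.
pose a := - (1 + t) / (2 * s).
have a0 : a != 0 by rewrite mulf_neq0 ?oppr_eq0 // invr_eq0 mulf_neq0 ?pnatr_eq0.
have ha : a = s * (1 - a ^+ 2).
  by apply: (eq_scaled_diff E (1 / (4 * s))); rewrite /a; field.
have a1 : 1 - a ^+ 2 != 0 by apply: contraNneq a0 => a1; rewrite ha a1 mulr0.
have hs : s = a / (1 - a ^+ 2) by rewrite {1}ha; field.
have ht : t = - 1 - 2 * a * s by rewrite /a; field.
exists a; split => //; first by apply: contraNneq a1 => ->; rewrite subrr.
by rewrite ht hs; field.
Qed.

Section SymmetricBiquadratic.
Context {R : comNzRingType}.

Lemma disc_quadratic (A B D : {poly R}) :
  disc (Poly [:: D; B; A]) = (B ^+ 2 - 4 * A * D)%:P.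
Proof.
rewrite /disc derivnS derivn1 Poly3E.
rewrite !(derivD, derivM, derivC, derivX) /=; ring.
Qed.

(* The coefficient of x^j u^i is the (i, j) entry of the symmetric matrix
   [[w, v, s]; [v, t, q]; [s, q, p]]. *)
Definition symbiq (p q s t v w : R) : {poly {poly R}} :=
  Poly [:: Poly [:: w; v; s]; Poly [:: v; t; q]; Poly [:: s; q; p]].

Lemma sym_deg2_symbiq {h : {poly {poly R}}} : deg2_each h -> swapXY h = h ->
  exists p q s t v w, h = symbiq p q s t v w.
Proof.
move=> [sh shi] hsym.
have hT i j : h`_i`_j = h`_j`_i by rewrite -{1}hsym coef_swapXY.
exists h`_2`_2, h`_2`_1, h`_2`_0, h`_1`_1, h`_1`_0, h`_0`_0.
rewrite {1}(poly_size3 sh) {1}(poly_size3 (shi 0%N)).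
rewrite {1}(poly_size3 (shi 1%N)) {1}(poly_size3 (shi 2%N)).
by rewrite (hT 0 1)%N (hT 0 2)%N (hT 1 2)%N.
Qed.

Lemma ev2_symbiq (p q s t v w x u : R) :
  ev2 (symbiq p q s t v w) x u =
  (s + q * x + p * x ^+ 2) * u ^+ 2 + (v + t * x + q * x ^+ 2) * u
  + (w + v * x + s * x ^+ 2).
Proof.
rewrite /ev2 /symbiq !Poly3E.
by rewrite !(hornerD, hornerM, hornerC, hornerX, hornerXn); ring.
Qed.

Lemma disc_symbiq (p q s t v w : R) :
  disc (symbiq p q s t v w) =
  (Poly [:: v ^+ 2 - 4 * s * w; 2 * v * t - 4 * (q * w + s * v);
            t ^+ 2 - 2 * v * q - 4 * p * w - 4 * s ^+ 2;
            2 * t * q - 4 * (p * v + q * s); q ^+ 2 - 4 * p * s])%:P.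
Proof.
rewrite disc_quadratic !Poly3E; congr polyC.
by rewrite [RHS]/= !cons_poly_def; ring.
Qed.

Lemma disc_symbiq_coef (p q s t v w : R) (r : {poly R}) :
  disc (symbiq p q s t v w) = r%:P ->
  [/\ v ^+ 2 - 4 * s * w = r`_0, 2 * v * t - 4 * (q * w + s * v) = r`_1,
      t ^+ 2 - 2 * v * q - 4 * p * w - 4 * s ^+ 2 = r`_2,
      2 * t * q - 4 * (p * v + q * s) = r`_3 & q ^+ 2 - 4 * p * s = r`_4].
Proof. by rewrite disc_symbiq => /polyC_inj <-; rewrite !coef_Poly. Qed.

End SymmetricBiquadratic.

Section RationalCases.
Context {F : numFieldType} {p q s t v w : F}.
Local Notation h := (symbiq p q s t v w).
Local Notation c0 := (v ^+ 2 - 4 * s * w).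
Local Notation c1 := (2 * v * t - 4 * (q * w + s * v)).
Local Notation c2 := (t ^+ 2 - 2 * v * q - 4 * p * w - 4 * s ^+ 2).
Local Notation c3 := (2 * t * q - 4 * (p * v + q * s)).
Local Notation c4 := (q ^+ 2 - 4 * p * s).

Lemma disc_symbiq_coefs_s_neq0 : s != 0 -> c4 = 0 ->
  let T := q * v / (2 * s) + 2 * s in
  [/\ c3 = 2 * q * (t - T), c1 = 2 * v * (t - T) + q / s * c0
    & c2 = (t - T) * (t + T) + (q / (2 * s)) ^+ 2 * c0].
Proof.
move=> s0 E4 T; have hp : p = q ^+ 2 / (4 * s).
  by apply: (eq_scaled_diff E4 (- 1 / (4 * s))); field.
by split; rewrite /T ?hp; field.
Qed.

Lemma symbiq_pq_eq0 : c3 = 0 -> c4 = 0 -> c0 * c1 = 0 -> c0 != 0 \/ c1 != 0 ->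
  p = 0 /\ q = 0.
Proof.
move=> E3 E4 E01 Ec.
have [s0|s0] := eqVneq s 0.
  subst s.
  have q0 : q = 0.
    by apply: sqrf0_eq; apply: (eq_scaled_diff E4 1); ring.
  subst q; split => //.
  have [v0|v0] := eqVneq v 0.
    by subst v; exfalso; case: Ec => /eqP; apply; ring.
  apply: (mulIf v0); rewrite mul0r.
  by apply: (eq_scaled_diff E3 (- 1 / 4)); field.
have [F3 F1 _] := disc_symbiq_coefs_s_neq0 s0 E4; set T := _ + 2 * s in F3 F1.
have [q0|q0] := eqVneq q 0.
  subst q; split => //; apply: (mulIf s0); rewrite mul0r.
  by apply: (eq_scaled_diff E4 (- 1 / 4)); field.
exfalso.
have tT : t - T = 0.
  have q2 : 2 * q != 0 by rewrite mulf_neq0 ?pnatr_eq0.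
  by apply: (mulfI q2); rewrite mulr0 -F3.
have c10 : c1 = q / s * c0 by rewrite F1 tT mulr0 add0r.
have : q / s * c0 ^+ 2 = 0 by rewrite -E01 c10; ring.
move/eqP; rewrite mulf_eq0 sqrf_eq0 mulf_eq0 invr_eq0 (negPf q0) (negPf s0) /=.
move=> /eqP c00.
by move: Ec; rewrite c10 c00 mulr0 eqxx; case.
Qed.

Lemma symbiq_q3 (d : F) : p = 0 -> q = 0 -> v = 0 -> s != 0 ->
  t ^+ 2 - 4 * s ^+ 2 = 1 -> 4 * s * w = d ^+ 2 ->
  exists a : F, a != 0 /\ a ^+ 2 != 1 /\ forall x u,
    ev2 h x u = a / (1 - a ^+ 2) * (x ^+ 2 + u ^+ 2)
                - (1 + a ^+ 2) / (1 - a ^+ 2) * x * u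
                + d ^+ 2 * (1 - a ^+ 2) / (4 * a).
Proof.
move=> p0 q0 v0 s0 /(hyperbola_param s0)[a [a0 a1 hs ht]] hw.
have {}hw : w = d ^+ 2 / (4 * s) by rewrite -hw; field.
have a1' : 1 - a ^+ 2 != 0 by rewrite subr_eq0 eq_sym.
exists a; do 2 split => //; move=> x u.
by rewrite ev2_symbiq p0 q0 v0 hw ht hs; field; rewrite a0.
Qed.

Lemma symbiq_disc1 : disc h = 1 ->
  (exists a : F, a != 0 /\ forall x u,
        ev2 h x u = (x - u) ^+ 2 / (2 * a) - a / 2)
  \/ (exists g0 g1 g2 : F, g1 ^+ 2 - 4 * g0 * g2 = 1 /\ forall x u,
        ev2 h x u = g0 * (x + u) ^+ 2 + g1 * (x + u) + g2).
Proof.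
rewrite -polyC1 => /disc_symbiq_coef[]; rewrite !coefE /= => E0 E1 E2 E3 E4.
have [p0 q0] : p = 0 /\ q = 0.
  by apply: symbiq_pq_eq0 => //; [rewrite E1 mulr0 | left; rewrite E0 oner_neq0].
subst p q; have [tS|tS] := eqVneq t (2 * s).
  right; exists s, v, w; split => // x u.
  by rewrite ev2_symbiq tS; ring.
left; have {}tS : t - 2 * s != 0 by rewrite subr_eq0.
have v0 : v = 0.
  by apply: (mulIf tS); rewrite mul0r; apply: (eq_scaled_diff E1 (1 / 2)); field.
subst v; have ht : t = - (2 * s).
  apply/eqP; rewrite -addr_eq0; apply/eqP/(mulfI tS); rewrite mulr0.
  by apply: (eq_scaled_diff E2 1); ring.
have s0 : s != 0 by apply: contraNneq tS => s0; rewrite ht s0 mulr0 oppr0 addr0.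
have hw : w = - 1 / (4 * s).
  by apply: (eq_scaled_diff E0 (- 1 / (4 * s))); field.
exists (1 / (2 * s)); split; first by rewrite div1r invr_eq0 mulf_neq0 ?pnatr_eq0.
by move=> x u; rewrite ev2_symbiq ht hw; field.
Qed.

Lemma symbiq_discX : disc h = ('X)%:P ->
  exists a : F, a != 0 /\ forall x u,
    ev2 h x u = (x - u) ^+ 2 / (4 * a) - a / 2 * (x + u) + a ^+ 3 / 4.
Proof.
move=> /disc_symbiq_coef[]; rewrite !coefE /= => E0 E1 E2 E3 E4.
have [p0 q0] : p = 0 /\ q = 0.
  by apply: symbiq_pq_eq0 => //; [rewrite E0 mul0r | right; rewrite E1 oner_neq0].
subst p q; have {}E1 : 2 * v * (t - 2 * s) = 1.
  by apply: (eq_scaled_diff E1 1); ring.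
have /andP[_ tS] : (2 * v != 0) && (t - 2 * s != 0).
  by rewrite -negb_or -mulf_eq0 E1 oner_neq0.
have ht : t = - (2 * s).
  apply/eqP; rewrite -addr_eq0; apply/eqP/(mulfI tS); rewrite mulr0.
  by apply: (eq_scaled_diff E2 1); ring.
have s0 : s != 0 by apply: contraNneq tS => s0; rewrite ht s0 mulr0 oppr0 addr0.
have hv : v = - 1 / (8 * s).
  by apply: (eq_scaled_diff E1 (- 1 / (8 * s))); rewrite ht; field.
have hw : w = v ^+ 2 / (4 * s).
  by apply: (eq_scaled_diff E0 (- 1 / (4 * s))); field.
exists (1 / (4 * s)); split; first by rewrite div1r invr_eq0 mulf_neq0 ?pnatr_eq0.
by move=> x u; rewrite ev2_symbiq ht hw hv; field.
Qed.

Lemma symbiq_discX2 : disc h = ('X ^+ 2)%:P ->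
  (exists g0 g1 g2 : F, g1 ^+ 2 - 4 * g0 * g2 = 1 /\ forall x u,
      ev2 h x u = g0 * x ^+ 2 * u ^+ 2 + g1 * x * u + g2)
  \/ (exists a : F, a != 0 /\ a ^+ 2 != 1 /\ forall x u,
      ev2 h x u = a / (1 - a ^+ 2) * (x ^+ 2 + u ^+ 2)
                  - (1 + a ^+ 2) / (1 - a ^+ 2) * x * u).
Proof.
move=> /disc_symbiq_coef[]; rewrite !coefE /= => E0 E1 E2 E3 E4.
have [s0|s0] := eqVneq s 0.
  subst s; have q0 : q = 0.
    by apply: sqrf0_eq; apply: (eq_scaled_diff E4 1); ring.
  have v0 : v = 0.
    by apply: sqrf0_eq; apply: (eq_scaled_diff E0 1); ring.
  subst q v; left; exists p, t, w.
  split; first by apply: (eq_scaled_diff E2 1); ring.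
  by move=> x u; rewrite ev2_symbiq; ring.
right; have [F3 F1 F2] := disc_symbiq_coefs_s_neq0 s0 E4.
set T := _ + 2 * s in F3 F1 F2.
rewrite E0 !mulr0 !addr0 in F1 F2.
rewrite E3 in F3; rewrite E1 in F1; rewrite E2 in F2.
have /andP[tT _] : (t - T != 0) && (t + T != 0).
  by rewrite -negb_or -mulf_eq0 -F2 oner_neq0.
have q0 : q = 0.
  by apply: (mulIf tT); rewrite mul0r; apply: (eq_scaled_diff F3 (- 1 / 2)); field.
have v0 : v = 0.
  by apply: (mulIf tT); rewrite mul0r; apply: (eq_scaled_diff F1 (- 1 / 2)); field.
have p0 : p = 0.
  apply: (mulIf s0); rewrite mul0r.
  by apply: (eq_scaled_diff E4 (- 1 / 4)); rewrite q0; field.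
have w0 : 4 * s * w = 0 ^+ 2 by apply: (eq_scaled_diff E0 (- 1)); rewrite v0; ring.
have E2' : t ^+ 2 - 4 * s ^+ 2 = 1.
  by apply: (eq_scaled_diff E2 1); rewrite p0 q0 v0; ring.
have [a [a0 [a1 H]]] := symbiq_q3 0 p0 q0 v0 s0 E2' w0.
by exists a; do 2 split => //; move=> x u; rewrite H expr0n !mul0r addr0.
Qed.

Lemma symbiq_discX2_sub (d : F) :
  d != 0 -> disc h = ('X ^+ 2 - (d ^+ 2)%:P)%:P ->
  exists a : F, a != 0 /\ a ^+ 2 != 1 /\ forall x u,
    ev2 h x u = a / (1 - a ^+ 2) * (x ^+ 2 + u ^+ 2)
                - (1 + a ^+ 2) / (1 - a ^+ 2) * x * u
                + d ^+ 2 * (1 - a ^+ 2) / (4 * a).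
Proof.
move=> d0 /disc_symbiq_coef[]; rewrite !coefE /= ?(subr0, sub0r).
move=> E0 E1 E2 E3 E4.
have c00 : v ^+ 2 - 4 * s * w != 0 by rewrite E0 oppr_eq0 sqrf_eq0.
have [p0 q0] : p = 0 /\ q = 0.
  by apply: symbiq_pq_eq0 => //; [rewrite E1 mulr0 | left].
have E2' : (t - 2 * s) * (t + 2 * s) = 1.
  by apply: (eq_scaled_diff E2 1); rewrite p0 q0; ring.
have /andP[tS _] : (t - 2 * s != 0) && (t + 2 * s != 0).
  by rewrite -negb_or -mulf_eq0 E2' oner_neq0.
have v0 : v = 0.
  apply: (mulIf tS); rewrite mul0r.
  by apply: (eq_scaled_diff E1 (1 / 2)); rewrite q0; field.
have s0 : s != 0 by apply: contraNneq c00 => ->; rewrite v0; apply/eqP; ring.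
apply: (symbiq_q3 d p0 q0 v0 s0).
  by apply: (eq_scaled_diff E2 1); rewrite p0 q0 v0; ring.
by apply: (eq_scaled_diff E0 (- 1)); rewrite v0; ring.
Qed.

Lemma symbiq_disc_cubic (g2 g3 : F) :
  disc h = (4%:P * 'X ^+ 3 - g2%:P * 'X - g3%:P)%:P ->
  exists a sg : F, sg ^+ 2 = (4%:P * 'X ^+ 3 - g2%:P * 'X - g3%:P).[a]
    /\ sg != 0 /\ forall x u,
    ev2 h x u = ((x * u + a * (x + u) + g2 / 4) ^+ 2
                 - (x + u + a) * (4 * a * x * u - g3)) / sg.
Proof.
move=> /disc_symbiq_coef[]; rewrite !coefE /= ?(mulr0, mulr1, subr0, sub0r).
move=> E0 E1 E2 E3 E4.
have p0 : p != 0.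
  apply/eqP => p0; subst p; have q0 : q = 0.
    by apply: sqrf0_eq; apply: (eq_scaled_diff E4 1); ring.
  have : (4 : F) = 0 by apply: (eq_scaled_diff E3 (- 1)); rewrite q0; ring.
  by move/eqP; rewrite pnatr_eq0.
have [sg [sg0 hp]] : exists sg : F, sg != 0 /\ p = 1 / sg.
  by exists p^-1; rewrite invr_eq0 p0; split => //; field.
subst p; have hw : w = sg / 4 * (t ^+ 2 - 2 * v * q - 4 * s ^+ 2).
  by apply: (eq_scaled_diff E2 (- sg / 4)); field.
have [a hq] : exists a : F, q = - 2 * a / sg by exists (- q * sg / 2); field.
subst w q; have hs : s = a ^+ 2 / sg.
  by apply: (eq_scaled_diff E4 (- sg / 4)); field.
subst s; have hv : v = 2 * a ^+ 3 / sg - a * t - sg.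
  by apply: (eq_scaled_diff E3 (- sg / 4)); field.
subst v; have ht : t = (g2 - 4 * a ^+ 2) / (2 * sg).
  by apply: (eq_scaled_diff E1 (- 1 / (2 * sg))); field.
subst t; have hg3 : g3 = 4 * a ^+ 3 - g2 * a - sg ^+ 2.
  by apply: (eq_scaled_diff E0 1); field.
exists a, sg; split.
  by rewrite hg3 !(hornerD, hornerN, hornerCM, hornerC, hornerX, hornerXn); ring.
by split => // x u; rewrite ev2_symbiq hg3; field.
Qed.

End RationalCases.

Section ClosedCase.
Context {C : numClosedFieldType} {p q s t v w : C}.
Local Notation h := (symbiq p q s t v w).

Lemma symbiq_disc0 : disc h = 0 ->
  (exists a : C, a != 0 /\ forall x u, ev2 h x u = (x - u) ^+ 2 / a)
  \/ (exists g0 g1 g2 : C, forall x u,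
        ev2 h x u = (g0 * x * u + g1 * (x + u) + g2) ^+ 2).
Proof.
rewrite -polyC0 => /disc_symbiq_coef[]; rewrite !coefE /= => E0 E1 E2 E3 E4.
have [s0|s0] := eqVneq s 0.
  subst s; have q0 : q = 0.
    by apply: sqrf0_eq; apply: (eq_scaled_diff E4 1); ring.
  have v0 : v = 0.
    by apply: sqrf0_eq; apply: (eq_scaled_diff E0 1); ring.
  subst q v; right.
  move: (sqrtC p) (sqrtCK p) (sqrtC w) (sqrtCK w) => g0 hp g2 hw; subst p w.
  have /eqP : (t - 2 * g0 * g2) * (t + 2 * g0 * g2) = 0.
    by apply: (eq_scaled_diff E2 1); ring.
  rewrite mulf_eq0 subr_eq0 addr_eq0 => /orP[]/eqP ht.
    by exists g0, 0, g2 => x u; rewrite ev2_symbiq ht; ring.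
  by exists g0, 0, (- g2) => x u; rewrite ev2_symbiq ht; ring.
have [F3 F1 F2] := disc_symbiq_coefs_s_neq0 (t := t) (v := v) (w := w) s0 E4.
set T := _ + 2 * s in F3 F1 F2.
rewrite E0 !mulr0 !addr0 in F1 F2.
rewrite E3 in F3; rewrite E1 in F1; rewrite E2 in F2.
have hp : p = q ^+ 2 / (4 * s).
  by apply: (eq_scaled_diff E4 (- 1 / (4 * s))); field.
have hw : w = v ^+ 2 / (4 * s).
  by apply: (eq_scaled_diff E0 (- 1 / (4 * s))); field.
have [tT|tT] := eqVneq t T.
  right; move: (sqrtC s) (sqrtCK s) => g1 hs.
  have g10 : g1 != 0 by apply: contraNneq s0 => g10; rewrite -hs g10 expr0n.
  exists (q / (2 * g1)), g1, (v / (2 * g1)) => x u.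
  by rewrite ev2_symbiq tT /T hp hw -hs; field.
left; have {}tT : t - T != 0 by rewrite subr_eq0.
have q0 : q = 0.
  by apply: (mulIf tT); rewrite mul0r; apply: (eq_scaled_diff F3 (- 1 / 2)); field.
have v0 : v = 0.
  by apply: (mulIf tT); rewrite mul0r; apply: (eq_scaled_diff F1 (- 1 / 2)); field.
have ht : t = - (2 * s).
  have tT' : t + T = 0 by apply: (mulfI tT); rewrite mulr0 -F2.
  by apply/eqP; rewrite -addr_eq0 -tT' /T q0 !mul0r add0r.
exists (1 / s); split; first by rewrite div1r invr_eq0.
by move=> x u; rewrite ev2_symbiq ht hp hw q0 v0; field.
Qed.

End ClosedCase.

Theorem proposition4 (C : numClosedFieldType) (h : {poly {poly C}}) :
  deg2_each h -> swapXY h = h ->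
  (
   (* r = 0 *)
   (disc h = 0 ->
     (exists a : C, a != 0 /\ forall x u, ev2 h x u = (x - u) ^+ 2 / a)
     \/ (exists g0 g1 g2 : C, forall x u,
           ev2 h x u = (g0 * x * u + g1 * (x + u) + g2) ^+ 2))
   /\ (* r = 1 *)
   (disc h = 1 ->
     (exists a : C, a != 0 /\ forall x u,
        ev2 h x u = (x - u) ^+ 2 / (2 * a) - a / 2)
     \/ (exists g0 g1 g2 : C, g1 ^+ 2 - 4 * g0 * g2 = 1 /\ forall x u,
           ev2 h x u = g0 * (x + u) ^+ 2 + g1 * (x + u) + g2))
   /\ (* r = x *)
   (disc h = ('X)%:P ->
     exists a : C, a != 0 /\ forall x u,
        ev2 h x u = (x - u) ^+ 2 / (4 * a) - a / 2 * (x + u) + a ^+ 3 / 4)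
   /\    (* r = x^2 *)
   (disc h = ('X ^+ 2)%:P ->
     (exists g0 g1 g2 : C, g1 ^+ 2 - 4 * g0 * g2 = 1 /\ forall x u,
           ev2 h x u = g0 * x ^+ 2 * u ^+ 2 + g1 * x * u + g2)
     \/ (exists a : C, a != 0 /\ a ^+ 2 != 1 /\ forall x u,
           ev2 h x u = a / (1 - a ^+ 2) * (x ^+ 2 + u ^+ 2)
                       - (1 + a ^+ 2) / (1 - a ^+ 2) * x * u))
   /\    (* r = x^2 - delta^2, delta <> 0 *)
   (forall d : C, d != 0 ->
   disc h = ('X ^+ 2 - (d ^+ 2)%:P)%:P ->
     exists a : C, a != 0 /\ a ^+ 2 != 1 /\ forall x u,
        ev2 h x u = a / (1 - a ^+ 2) * (x ^+ 2 + u ^+ 2)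
                    - (1 + a ^+ 2) / (1 - a ^+ 2) * x * u
                    + d ^+ 2 * (1 - a ^+ 2) / (4 * a))
   /\    (* r = 4x^3 - g2 x - g3, g2^3 - 27 g3^2 <> 0 *)
   (forall g2 g3 : C, g2 ^+ 3 - 27 * g3 ^+ 2 != 0 ->
   let r := 4%:P * 'X ^+ 3 - g2%:P * 'X - g3%:P in
   disc h = r%:P ->
     exists a s : C, s ^+ 2 = r.[a] /\ s != 0 /\ forall x u,
        ev2 h x u = ((x * u + a * (x + u) + g2 / 4) ^+ 2
                     - (x + u + a) * (4 * a * x * u - g3)) / s)).
Proof.
move=> hdeg hsym; have [p [q [s [t [v [w ->]]]]]] := sym_deg2_symbiq hdeg hsym.
split; first exact: symbiq_disc0.
split; first exact: symbiq_disc1.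
split; first exact: symbiq_discX.
split; first exact: symbiq_discX2.
split; first exact: symbiq_discX2_sub.
move=> g2 g3 _ r; exact: symbiq_disc_cubic.
Qed.
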